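(* Let $G_1,G_2$ be finite simple graphs, each containing a clique on $k$ vertices, say $K_1\le G_1$ and $K_2\le G_2$. Let $H$ be the graph obtained from the disjoint union of $G_1$ and $G_2$ by identifying the vertices of $K_1$ with those of $K_2$ via a bijection (gluing along a $k$-clique $K$). Then \[\tau_H=\frac{\tau_{G_1}\tau_{G_2}}{\tau_K},\] where $K$ is the complete graph on $k$ vertices.
   Context: $X_G=\sum_\kappa\prod_v x_{\kappa(v)}$ over proper colourings $\kappa:V(G)\to\{1,2,\dots\}$. $P_\lambda$ is the disjoint union of paths with $\lambda_1,\dots,\lambda_{\ell(\lambda)}$ vertices; $\{X_{P_\lambda}\}$ is a basis of the symmetric functions over $\mathbb{Q}$. The tree polynomial is $\tau_G(x)=\sum_\lambda a_\lambda x^{\ell(\lambda)}$ where $X_G=\sum_\lambda a_\lambda X_{P_\lambda}$. *)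

From HB Require Import structures.
From mathcomp Require Import all_boot all_order all_algebra.
From mathcomp Require Import mpoly.

Set Implicit Arguments.
Unset Strict Implicit.
Unset Printing Implicit Defensive.

Import GRing.Theory.
Local Open Scope ring_scope.

Definition simple_graph (T : finType) (e : rel T) : Prop :=
  ssrbool.symmetric e /\ irreflexive e.

Definition proper_col (T : finType) (e : rel T) (N : nat)
  (c : {ffun T -> 'I_N}) : bool :=
  [forall u, forall v, e u v ==> (c u != c v)].

(* The chromatic symmetric function X_G, truncated to the N variables
   x_0..x_(N-1) (i.e. with x_i := 0 for i >= N).  Two symmetric functions
   are equal iff all their truncations agree. *)
Definition chrom (T : finType) (e : rel T) (N : nat) : {mpoly rat[N]} :=
  \sum_(c : {ffun T -> 'I_N} | proper_col e c) \prod_(v : T) 'X_(c v).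

(* Partitions of n, encoded as weakly decreasing n-tuples of values in
   [0,n] with sum n (padded with zeros); [partseq t] is the partition
   lambda = (lambda_1 >= ... >= lambda_l > 0). *)
Definition is_part (n : nat) (t : n.-tuple 'I_n.+1) : bool :=
  sorted geq (map val t) && (sumn (map val t) == n)%N.

Definition partseq (n : nat) (t : n.-tuple 'I_n.+1) : seq nat :=
  [seq i <- map val t | (0 < i)%N].

Definition path_vert (l : seq nat) : finType :=
  {p : 'I_(size l) * 'I_(sumn l) | (p.2 < nth 0%N l p.1)%N}.

Definition path_rel (l : seq nat) : rel (path_vert l) :=
  fun u v => ((val u).1 == (val v).1) &&
             (((val u).2.+1 == (val v).2 :> nat) ||
              ((val v).2.+1 == (val u).2 :> nat)).

(* [is_tree_poly e tau] : tau is the tree polynomial of G = (T,e), i.e.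
   X_G = sum_lambda a_lambda X_{P_lambda} (as symmetric functions, i.e. in
   every number N of variables) and tau = sum_lambda a_lambda x^{l(lambda)}.
   Since {X_{P_lambda}} is a basis, tau is uniquely determined. *)
Definition is_tree_poly (T : finType) (e : rel T) (tau : {poly rat}) : Prop :=
  exists a : seq nat -> rat,
    (forall N : nat,
       chrom e N =
       \sum_(t : #|T|.-tuple 'I_#|T|.+1 | is_part t)
          a (partseq t) *: chrom (@path_rel (partseq t)) N)
    /\ tau = \sum_(t : #|T|.-tuple 'I_#|T|.+1 | is_part t)
          a (partseq t) *: 'X^(size (partseq t)).

Definition complete_rel (k : nat) : rel 'I_k := fun i j => i != j.

Definition is_clique (T : finType) (e : rel T) (k : nat) (f : 'I_k -> T) : Prop :=
  injective f /\ forall i j, i != j -> e (f i) (f j).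

(* Gluing G1 and G2 along the k-cliques f1, f2 (f1 i identified with f2 i).
   Vertex set: V(G1) + (V(G2) minus the clique). *)
Definition glue_vert (T2 : finType) (k : nat) (f2 : 'I_k -> T2) : finType :=
  {x : T2 | x \notin codom f2}.

Definition glue_map1 (T1 T2 : finType) (k : nat) (f2 : 'I_k -> T2) (x : T1)
  : (T1 + glue_vert f2)%type := inl x.

Definition glue_map2 (T1 T2 : finType) (k : nat) (f1 : 'I_k -> T1)
  (f2 : 'I_k -> T2) (x : T2) : (T1 + glue_vert f2)%type :=
  match boolP (x \in codom f2) with
  | AltTrue h => inl (f1 (iinv h))
  | AltFalse h => inr (exist _ x h)
  end.

Definition glue_rel (T1 T2 : finType) (e1 : rel T1) (e2 : rel T2) (k : nat)
  (f1 : 'I_k -> T1) (f2 : 'I_k -> T2) : rel (T1 + glue_vert f2)%type :=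
  fun u v =>
    [exists x : T1, exists y : T1,
       [&& e1 x y, glue_map1 f2 x == u & glue_map1 f2 y == v]] ||
    [exists x : T2, exists y : T2,
       [&& e2 x y, glue_map2 f1 f2 x == u & glue_map2 f1 f2 y == v]].
Arguments glue_rel [T1 T2] e1 e2 [k] f1 f2 _ _.

(* Evaluating X_G at N ones counts the proper N-colourings, and P_lambda on
   n vertices has N^l(lambda) (N-1)^(n-l(lambda)) of them; so with N = m+2 a
   tree polynomial satisfies  chi_G(m+2) = (m+1)^n tau_G((m+2)/(m+1)).
   A colouring of H is a pair of colourings of G1 and G2 agreeing on the
   clique, which is coloured injectively; permuting colours shows that the
   number of extensions of an injective colouring of the clique does not depend
   on it.  Hence chi_H chi_K = chi_G1 chi_G2 for every N, and the identity of
   tree polynomials holds at the infinitely many points (m+2)/(m+1). *)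
From HB Require Import structures.
From mathcomp Require Import all_boot all_order all_algebra all_fingroup all_solvable.
From mathcomp Require Import mpoly zify ring.

Set Implicit Arguments.
Unset Strict Implicit.
Unset Printing Implicit Defensive.

Import GRing.Theory Num.Theory.
Local Open Scope ring_scope.

Lemma perm_ext_inj (T : finType) (k : nat) (phi phi' : 'I_k -> T) :
  injective phi -> injective phi' ->
  exists s : {perm T}, forall i, s (phi i) = phi' i.
Proof.
move=> phi_inj phi'_inj.
have k_le : (k <= #|T|)%N by rewrite -[k]card_ord; apply: leq_card phi_inj.
have trans_k := ntransitive_weak k_le (Sym_trans T).
have dtuple_inj (f : 'I_k -> T) :
    injective f -> [tuple f i | i < k] \in k.-dtuple(setT).
  move=> f_inj; apply/dtuple_onP; split=> [i j|i]; rewrite ?inE //.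
  by rewrite !tnth_mktuple => /f_inj.
have [s _ hs] := atransP2 trans_k (dtuple_inj _ phi_inj) (dtuple_inj _ phi'_inj).
exists s => i; have := congr1 (fun t => tnth t i) hs.
by rewrite /= tnth_map tnth_ord_tuple /n_act /= !tnth_map tnth_ord_tuple apermE.
Qed.

Definition proper_cols (T : finType) (e : rel T) (N : nat) :=
  [set c : {ffun T -> 'I_N} | proper_col e c].

Definition chrom_num (T : finType) (e : rel T) (N : nat) := #|proper_cols e N|.

Lemma chrom_meval1 (T : finType) (e : rel T) (N : nat) :
  (chrom e N).@[fun _ => 1] = (chrom_num e N)%:R.
Proof.
rewrite /chrom rmorph_sum /= (eq_bigr (fun _ => 1)); last first.
  by move=> c _; rewrite rmorph_prod /=; apply: big1 => v _; rewrite mevalXU.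
by rewrite sumr_const /chrom_num cardsE.
Qed.

Definition inj_maps (k N : nat) := [set phi : {ffun 'I_k -> 'I_N} | injectiveb phi].

Lemma chrom_num_complete (k N : nat) : chrom_num (@complete_rel k) N = #|inj_maps k N|.
Proof.
apply: eq_card => phi; rewrite !inE; apply/forallP/injectiveP.
  move=> proper i j phi_ij; case: (eqVneq i j) => // ne_ij.
  by have /forallP /(_ j) /implyP /(_ ne_ij) := proper i; rewrite phi_ij eqxx.
move=> phi_inj i; apply/forallP => j; apply/implyP.
by apply: contra => /eqP /phi_inj ->.
Qed.

Lemma chrom_num_complete_gt0 (k N : nat) : (k <= N)%N ->
  (0 < chrom_num (@complete_rel k) N)%N.
Proof.
move=> le_kN; rewrite chrom_num_complete card_gt0; apply/set0Pn.
exists [ffun i => widen_ord le_kN i]; rewrite inE; apply/injectiveP => i j.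
rewrite !ffunE => /(congr1 val) /= ij_val; exact: val_inj ij_val.
Qed.

Section CliqueExtensions.
Variables (k N : nat) (T : finType) (e : rel T) (f : 'I_k -> T).

Definition restr (c : {ffun T -> 'I_N}) : {ffun 'I_k -> 'I_N} := [ffun i => c (f i)].

Definition ext_count (phi : {ffun 'I_k -> 'I_N}) :=
  #|[set c : {ffun T -> 'I_N} | proper_col e c && (restr c == phi)]|.

Lemma ext_count_le phi phi' : phi \in inj_maps k N -> phi' \in inj_maps k N ->
  (ext_count phi <= ext_count phi')%N.
Proof.
rewrite !inE => /injectiveP phi_inj /injectiveP phi'_inj.
have [s hs] := perm_ext_inj phi_inj phi'_inj.
pose recol (c : {ffun T -> 'I_N}) := [ffun v => s (c v)].
have recol_inj : injective recol.
  move=> c c' /ffunP eq_cc'; apply/ffunP => v.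
  by have := eq_cc' v; rewrite !ffunE => /perm_inj.
rewrite /ext_count -(card_imset _ recol_inj); apply/subset_leq_card/subsetP => d.
case/imsetP => c; rewrite !inE => /andP[/forallP proper /eqP restr_c] ->.
apply/andP; split.
  apply/forallP => u; apply/forallP => v; apply/implyP => euv.
  have /forallP /(_ v) /implyP /(_ euv) := proper u.
  by rewrite !ffunE; apply: contra => /eqP /perm_inj ->.
by apply/eqP/ffunP => i; rewrite !ffunE -hs -restr_c ffunE.
Qed.

Lemma ext_count_eq phi phi' : phi \in inj_maps k N -> phi' \in inj_maps k N ->
  ext_count phi = ext_count phi'.
Proof. by move=> phi_inj phi'_inj; apply/anti_leq; rewrite !ext_count_le. Qed.

Hypothesis f_clique : is_clique e f.

Lemma restr_proper_inj c : proper_col e c -> restr c \in inj_maps k N.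
Proof.
move=> /forallP proper; rewrite inE; apply/injectiveP => i j; rewrite !ffunE => c_ij.
case: (eqVneq i j) => // ne_ij; have /forallP /(_ (f j)) /implyP := proper (f i).
by rewrite c_ij eqxx => /(_ (f_clique.2 _ _ ne_ij)).
Qed.

Lemma chrom_num_restr_sum :
  chrom_num e N = (\sum_(phi in inj_maps k N) ext_count phi)%N.
Proof.
rewrite /chrom_num -sum1_card (eq_bigl (fun c => proper_col e c)); last first.
  by move=> c; rewrite inE.
rewrite (partition_big restr (mem (inj_maps k N))) /=; last exact: restr_proper_inj.
apply: eq_bigr => phi _; rewrite /ext_count -sum1_card.
by apply: eq_bigl => c; rewrite inE.
Qed.

End CliqueExtensions.

Section Gluing.
Variables (T1 T2 : finType) (e1 : rel T1) (e2 : rel T2) (k N : nat)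
  (f1 : 'I_k -> T1) (f2 : 'I_k -> T2).
Hypotheses (f1_clique : is_clique e1 f1) (f2_clique : is_clique e2 f2).
Local Notation VH := (T1 + glue_vert f2)%type.
Local Notation eH := (glue_rel e1 e2 f1 f2).

Lemma glue_map2_clique i : glue_map2 f1 f2 (f2 i) = inl (f1 i).
Proof.
rewrite /glue_map2; destruct (boolP (f2 i \in codom f2)) as [h|h].
  2: by case/negP: h; apply: codom_f.
by congr (inl (f1 _)); apply: f2_clique.1; rewrite f_iinv.
Qed.

Lemma glue_map2_val (y : glue_vert f2) : glue_map2 f1 f2 (val y) = inr y.
Proof.
case: y => y y_out; rewrite /glue_map2 /=; destruct (boolP _) as [y_in|y_out'].
  by case/negP: y_out.
by rewrite (bool_irrelevance y_out' y_out).
Qed.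

Definition glue_col1 (c : {ffun VH -> 'I_N}) : {ffun T1 -> 'I_N} :=
  [ffun x => c (glue_map1 f2 x)].
Definition glue_col2 (c : {ffun VH -> 'I_N}) : {ffun T2 -> 'I_N} :=
  [ffun y => c (glue_map2 f1 f2 y)].

Lemma proper_glue_col c :
  proper_col eH c = proper_col e1 (glue_col1 c) && proper_col e2 (glue_col2 c).
Proof.
apply/forallP/andP => [proper|[/forallP proper1 /forallP proper2] u].
  split; apply/forallP => x; apply/forallP => y; apply/implyP => exy; rewrite !ffunE.
    apply: (implyP (forallP (proper _) _)); apply/orP; left.
    by apply/existsP; exists x; apply/existsP; exists y; rewrite exy !eqxx.
  apply: (implyP (forallP (proper _) _)); apply/orP; right.
  by apply/existsP; exists x; apply/existsP; exists y; rewrite exy !eqxx.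
apply/forallP => v; apply/implyP.
case/orP => /existsP [x /existsP [y /and3P [exy /eqP <- /eqP <-]]].
  by have /forallP /(_ y) /implyP /(_ exy) := proper1 x; rewrite !ffunE.
by have /forallP /(_ y) /implyP /(_ exy) := proper2 x; rewrite !ffunE.
Qed.

Definition agreeing_pairs :=
  [set p : {ffun T1 -> 'I_N} * {ffun T2 -> 'I_N} |
    [&& proper_col e1 p.1, proper_col e2 p.2 & restr f1 p.1 == restr f2 p.2]].

Lemma chrom_num_glue_pairs : chrom_num eH N = #|agreeing_pairs|.
Proof.
pose split_col c := (glue_col1 c, glue_col2 c).
have split_inj : injective split_col.
  move=> c c' [/ffunP eq1 /ffunP eq2]; apply/ffunP => [[x|y]].
    by have := eq1 x; rewrite !ffunE.
  by have := eq2 (val y); rewrite !ffunE glue_map2_val.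
rewrite /chrom_num -(card_imset _ split_inj); apply: eq_card => p.
apply/imsetP/idP => [[c]|].
  rewrite !inE proper_glue_col => /andP[proper1 proper2] -> /=.
  rewrite proper1 proper2 /=; apply/eqP/ffunP => i.
  by rewrite !ffunE glue_map2_clique.
case: p => c1 c2; rewrite inE /= => /and3P [proper1 proper2 /eqP /ffunP agree].
pose c : {ffun VH -> 'I_N} :=
  [ffun v => match v with inl x => c1 x | inr y => c2 (val y) end].
have c1E : glue_col1 c = c1 by apply/ffunP => x; rewrite !ffunE.
have c2E : glue_col2 c = c2.
  apply/ffunP => y; rewrite !ffunE.
  case: (boolP (y \in codom f2)) => [/codomP [i ->]|y_out].
    by rewrite glue_map2_clique /=; have := agree i; rewrite !ffunE.
  by rewrite -[y]/(val (exist _ y y_out : glue_vert f2)) glue_map2_val.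
exists c; last by rewrite /split_col c1E c2E.
by rewrite inE proper_glue_col c1E c2E proper1 proper2.
Qed.

Lemma chrom_num_glue_sum : chrom_num eH N =
  (\sum_(phi in inj_maps k N) ext_count e1 f1 phi * ext_count e2 f2 phi)%N.
Proof.
rewrite chrom_num_glue_pairs -sum1_card.
rewrite (eq_bigl (fun p => proper_col e1 p.1 &&
   (proper_col e2 p.2 && (restr f2 p.2 == restr f1 p.1)))); last first.
  by case=> c1 c2; rewrite inE /= eq_sym.
rewrite -(pair_big_dep (fun c1 => proper_col e1 c1)
   (fun c1 c2 => proper_col e2 c2 && (restr f2 c2 == restr f1 c1)) (fun _ _ => 1%N)) /=.
rewrite (partition_big (restr f1) (mem (inj_maps k N))) /=.
  2: exact: restr_proper_inj.
apply: eq_bigr => phi _; rewrite (eq_bigr (fun _ => ext_count e2 f2 phi)); last first.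
  move=> c1 /andP[_ /eqP ->]; rewrite /ext_count -sum1_card.
  by apply: eq_bigl => c; rewrite inE.
by rewrite sum_nat_const /ext_count; congr (_ * _)%N; apply: eq_card => c; rewrite !inE.
Qed.

Lemma chrom_num_glue :
  (chrom_num eH N * chrom_num (@complete_rel k) N = chrom_num e1 N * chrom_num e2 N)%N.
Proof.
rewrite chrom_num_glue_sum (chrom_num_restr_sum N f1_clique).
rewrite (chrom_num_restr_sum N f2_clique) chrom_num_complete.
have [->|/set0Pn [phi0 phi0_inj]] := eqVneq (inj_maps k N) set0.
  by rewrite !big_set0.
have count1 phi (phi_inj : phi \in inj_maps k N) := ext_count_eq e1 f1 phi_inj phi0_inj.
have count2 phi (phi_inj : phi \in inj_maps k N) := ext_count_eq e2 f2 phi_inj phi0_inj.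
rewrite (eq_bigr (fun=> ext_count e1 f1 phi0 * ext_count e2 f2 phi0)%N); last first.
  by move=> phi phi_inj; rewrite count1 ?count2.
rewrite (eq_bigr _ count1) (eq_bigr _ count2) !sum_nat_const.
by rewrite mulnC mulnA mulnACA.
Qed.

Lemma card_glue_vert : (#|{: VH}| + k = #|T1| + #|T2|)%N.
Proof.
rewrite card_sum card_sig -addnA; congr (_ + _)%N.
by rewrite -(cardC (mem (codom f2))) (card_codom f2_clique.1) card_ord addnC.
Qed.

End Gluing.

Lemma leq_nth_sumn (s : seq nat) i : (nth 0 s i <= sumn s)%N.
Proof.
elim: s i => [|a s IHs] [|i] //=; first exact: leq_addr.
exact: leq_trans (IHs i) (leq_addl _ _).
Qed.

Section PathForest.
Variable l : seq nat.
Local Notation V := (path_vert l).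

Definition depth (v : V) : nat := (val v).2.

Lemma card_path_vert_depth (P : pred nat) :
  #|[pred v : V | P (depth v)]| =
  (\sum_(i < size l) \sum_(0 <= j < nth 0 l i | P j) 1)%N.
Proof.
pose Q := [pred p : 'I_(size l) * 'I_(sumn l) | (p.2 < nth 0 l p.1)%N && P p.2].
have -> : #|[pred v : V | P (depth v)]| = #|Q|.
  rewrite -(card_imset [pred v : V | P (depth v)] val_inj).
  apply: eq_card => p; rewrite !inE; apply/imsetP/idP => [[v Pv ->]|/andP[p_lt Pp]].
    by rewrite (valP v).
  by exists (Sub p p_lt); rewrite // inE /depth SubK.
rewrite -sum1_card -(pair_big_dep xpredT
   (fun (i : 'I_(size l)) (j : 'I_(sumn l)) => (j < nth 0 l i)%N && P j)
   (fun _ _ => 1%N)) /=.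
apply: eq_bigr => i _.
rewrite (big_nat_widen _ _ _ _ _ (leq_nth_sumn l i)) big_mkord.
by apply: eq_bigl => j; rewrite andbC.
Qed.

Lemma card_path_vert : #|V| = sumn l.
Proof.
have := card_path_vert_depth xpredT; rewrite (eq_card (B := V)) // => ->.
under eq_bigr do rewrite big_mkcond /= sum_nat_const_nat subn0 muln1.
by rewrite sumnE (big_nth 0) big_mkord.
Qed.

Hypothesis l_pos : all (fun n => 0 < n)%N l.

Lemma card_path_roots : #|[pred v : V | depth v == 0%N]| = size l.
Proof.
rewrite (card_path_vert_depth (pred1 0%N)) (eq_bigr (fun _ => 1%N)).
  by rewrite sum1_card card_ord.
move=> i _.
have : (0 < nth 0 l i)%N by apply: (allP l_pos); apply: mem_nth.
case: (nth 0 l i) => // n _; rewrite big_mkcond big_ltn //= big1_seq // => j.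
by rewrite mem_index_iota; case: j.
Qed.

Lemma card_path_nonroots : #|[pred v : V | 0 < depth v]%N| = (sumn l - size l)%N.
Proof.
rewrite -card_path_vert -card_path_roots -(cardC [pred v : V | depth v == 0%N]) addKn.
by apply: eq_card => v; rewrite !inE lt0n.
Qed.

Definition parent (v : V) : V :=
  insubd v ((val v).1, Ordinal (leq_ltn_trans (leq_pred _) (ltn_ord (val v).2))).

Lemma depth_parent v : depth (parent v) = (depth v).-1.
Proof.
rewrite /depth /parent insubdK //; exact: leq_ltn_trans (leq_pred _) (valP v).
Qed.

Lemma parent_fst v : (val (parent v)).1 = (val v).1.
Proof.
rewrite /parent insubdK //; exact: leq_ltn_trans (leq_pred _) (valP v).
Qed.

Lemma eq_parent u v : (val u).1 = (val v).1 -> (depth u).+1 = depth v -> u = parent v.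
Proof.
move=> eq_fst eq_depth; apply: val_inj.
rewrite [val u]surjective_pairing [val (parent v)]surjective_pairing parent_fst eq_fst.
congr pair; apply: val_inj; rewrite -[LHS]/(depth u) -[RHS]/(depth (parent v)).
by rewrite depth_parent -eq_depth.
Qed.

Lemma path_rel_parent v : (0 < depth v)%N -> path_rel (parent v) v.
Proof.
move=> depth_gt0; rewrite /path_rel parent_fst eqxx /=.
by have := depth_parent v; rewrite /depth in depth_gt0 * => ->; rewrite prednK // eqxx.
Qed.

Lemma path_relP u v : path_rel u v ->
  (0 < depth v)%N && (u == parent v) || (0 < depth u)%N && (v == parent u).
Proof.
case/andP => /eqP eq_fst /orP[|] /eqP eq_depth; apply/orP; [left|right];
  by rewrite /depth -eq_depth /=; apply/eqP/eq_parent.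
Qed.

Variable m : nat.

(* A colouring is encoded by its root colours and the colour differences along
   edges; it is proper iff no difference vanishes. *)
Definition parent_diff (c : {ffun V -> 'I_m.+1}) : {ffun V -> 'I_m.+1} :=
  [ffun v => if (0 < depth v)%N then c v - c (parent v) else c v].

Lemma parent_diff_inj : injective parent_diff.
Proof.
move=> c c' /ffunP eq_diff; apply/ffunP => v.
elim: {v}(depth v) {-2}v (erefl (depth v)) => [|n IHn] v depth_v;
  have := eq_diff v; rewrite !ffunE depth_v //=.
by rewrite (IHn (parent v)) ?depth_parent ?depth_v // => /addIr.
Qed.

Definition nonroot_nonzero :=
  [set g : {ffun V -> 'I_m.+1} | [forall v, (0 < depth v)%N ==> (g v != 0)]].

Lemma proper_path_col c :
  proper_col (@path_rel l) c = (parent_diff c \in nonroot_nonzero).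
Proof.
rewrite inE; apply/forallP/forallP => [proper v|nonzero u].
  apply/implyP => depth_gt0; rewrite ffunE depth_gt0 subr_eq0.
  have /forallP /(_ v) /implyP := proper (parent v).
  by rewrite eq_sym; apply; apply: path_rel_parent.
apply/forallP => v; apply/implyP => /path_relP.
case/orP => /andP[depth_gt0 /eqP->].
  by have /implyP := nonzero v; rewrite ffunE depth_gt0 subr_eq0 eq_sym; apply.
by have /implyP := nonzero u; rewrite ffunE depth_gt0 subr_eq0; apply.
Qed.

Lemma card_nonroot_nonzero : #|nonroot_nonzero| =
  (\prod_(v : V) (if (0 < depth v)%N then m else m.+1))%N.
Proof.
pose F (v : V) := if (0 < depth v)%N then predC1 (0 : 'I_m.+1) else predT.
have -> : #|nonroot_nonzero| = #|family F|.
  apply: eq_card => g; rewrite inE; apply/forallP/familyP => nonzero v.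
    by have /implyP := nonzero v; rewrite /F; case: ifP => // _ g_v; rewrite inE g_v.
  by have := nonzero v; rewrite /F; case: ifP => //= _; rewrite inE.
rewrite card_family foldrE big_map big_enum; apply: eq_bigr => v _.
by rewrite /F; case: ifP => _; rewrite ?cardC1 card_ord.
Qed.

Lemma card_path_proper_cols :
  chrom_num (@path_rel l) m.+1 = (m.+1 ^ size l * m ^ (sumn l - size l))%N.
Proof.
rewrite /chrom_num.
have -> : proper_cols (@path_rel l) m.+1 = parent_diff @^-1: nonroot_nonzero.
  by apply/setP => c; rewrite !inE proper_path_col inE.
rewrite card_preimset ?card_nonroot_nonzero; last exact: parent_diff_inj.
rewrite (bigID (fun v => 0 < depth v)%N) /=.
rewrite (eq_bigr (fun _ => m)); last by move=> v ->.
rewrite [X in (_ * X)%N](eq_bigr (fun _ => m.+1)); last by move=> v /negbTE ->.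
rewrite !prod_nat_const card_path_nonroots mulnC; congr (_ ^ _ * _)%N.
by apply: etrans card_path_roots; apply: eq_card => v; rewrite -!topredE /= lt0n negbK.
Qed.

End PathForest.

Lemma sumn_filter_pos (s : seq nat) : sumn [seq n <- s | (0 < n)%N] = sumn s.
Proof. by elim: s => //= -[|n] s IHs /=; rewrite IHs. Qed.

Definition tree_point (m : nat) : rat := m.+2%:R / m.+1%:R.

Lemma tree_point_inj : injective tree_point.
Proof.
move=> m m' /eqP; rewrite /tree_point eqr_div ?pnatr_eq0 //.
rewrite -!natrM eqr_nat => /eqP eq_mm'.
by apply/eqP; rewrite -eqSS; apply/eqP; nia.
Qed.

Lemma path_count_tree_point (m l n : nat) : (l <= n)%N ->
  (m.+2 ^ l * m.+1 ^ (n - l))%:R = m.+1%:R ^+ n * tree_point m ^+ l :> rat.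
Proof.
move=> le_ln; rewrite -[in RHS](subnK le_ln) exprD /tree_point expr_div_n natrM !natrX.
by field; rewrite expf_neq0 // pnatr_eq0.
Qed.

Lemma chrom_num_tree_poly (T : finType) (e : rel T) (tau : {poly rat}) (m : nat) :
  is_tree_poly e tau -> (chrom_num e m.+2)%:R = m.+1%:R ^+ #|T| * tau.[tree_point m].
Proof.
case=> a [chromE ->]; rewrite -chrom_meval1 chromE rmorph_sum horner_sum mulr_sumr /=.
apply: eq_bigr => t /andP[_ /eqP sum_t].
have size_le : (size (partseq t) <= #|T|)%N.
  by rewrite size_filter (leq_trans (count_size _ _)) // size_map size_tuple.
rewrite mevalZ chrom_meval1 card_path_proper_cols ?filter_all //.
rewrite /partseq sumn_filter_pos sum_t -/(partseq t) hornerZ hornerXn.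
by rewrite path_count_tree_point // mulrCA.
Qed.

Lemma poly_eq0_inj_roots (R : idomainType) (p : {poly R}) (x : nat -> R) :
  injective x -> (forall m, root p (x m)) -> p = 0.
Proof.
move=> x_inj p_roots; apply: (@roots_geq_poly_eq0 _ _ (map x (iota 0 (size p)))).
- by apply/allP => r /mapP [m _ ->].
- by rewrite map_inj_uniq ?iota_uniq.
- by rewrite size_map size_iota.
Qed.

Theorem corollary4p1 (T1 T2 : finType) (e1 : rel T1) (e2 : rel T2) (k : nat)
  (f1 : 'I_k -> T1) (f2 : 'I_k -> T2)
  (tau1 tau2 tauK tauH : {poly rat}) :
  simple_graph e1 -> simple_graph e2 ->
  is_clique e1 f1 -> is_clique e2 f2 ->
  is_tree_poly e1 tau1 -> is_tree_poly e2 tau2 ->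
  is_tree_poly (@complete_rel k) tauK ->
  is_tree_poly (glue_rel e1 e2 f1 f2) tauH ->
  tauK != 0 /\ tauH * tauK = tau1 * tau2.
Proof.
move=> _ _ f1_clique f2_clique tree1 tree2 treeK treeH; split.
  apply: contraTneq (chrom_num_complete_gt0 (leqW (leqnSn k))) => tauK0.
  by rewrite -(ltr_nat rat) (chrom_num_tree_poly k treeK) tauK0 horner0 mulr0.
apply/eqP; rewrite -subr_eq0; apply/eqP/(poly_eq0_inj_roots tree_point_inj) => m.
have := congr1 (fun n => n%:R : rat) (chrom_num_glue m.+2 f1_clique f2_clique).
rewrite /= !natrM (chrom_num_tree_poly m tree1) (chrom_num_tree_poly m tree2).
rewrite (chrom_num_tree_poly m treeK) (chrom_num_tree_poly m treeH) card_ord.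
rewrite mulrACA -exprD [RHS]mulrACA -exprD (card_glue_vert T1 f2_clique).
move/(mulfI (expf_neq0 _ _)); rewrite pnatr_eq0 => /(_ isT) eval_eq.
by rewrite /root hornerD hornerN !hornerM eval_eq subrr.
Qed.
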